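(* Let $\mathcal{X}$ be a real Hilbert space, let $d_1,d_2,d_3:\mathcal{X}\to(-\infty,+\infty]$ be proper closed convex functions and $\gamma>0$. Let $z^0\in\mathcal{X}$ and for $k=0,1,\dots$ define $w^k_{d_3}=\operatorname{prox}^\gamma_{d_3}(z^k)$; choose $\nabla d_2(w^k_{d_3})\in\partial d_2(w^k_{d_3})$; $w^k_{d_1}=\operatorname{prox}^\gamma_{d_1}\big(2w^k_{d_3}-z^k-\gamma\nabla d_2(w^k_{d_3})\big)$; $w^k_{d_2}=\operatorname{prox}^\gamma_{d_2}\big(w^k_{d_1}+\gamma\nabla d_2(w^k_{d_3})\big)$; $z^{k+1}=z^k+w^k_{d_2}-w^k_{d_3}$, and set $\nabla d_2(w^k_{d_2}):=\gamma^{-1}(w^k_{d_1}+\gamma\nabla d_2(w^k_{d_3})-w^k_{d_2})\in\partial d_2(w^k_{d_2})$. Let $w^*$ be a fixed point of this iteration (i.e. of the map $z^k\mapsto z^{k+1}$). Then for every $k\ge0$, $$\begin{aligned} &2\gamma\big(d_1(w^k_{d_1})+d_2(w^k_{d_3})+d_3(w^k_{d_3})-(d_1+d_2+d_3)(w^* )\big)\\ &\le \|z^k-w^*\|^2-\|z^k-z^{k+1}\|^2-\|z^{k+1}-w^*\|^2+2\gamma\langle\nabla d_2(w^k_{d_3})-\nabla d_2(w^k_{d_2}),z^k-w^*\rangle\\ &\quad-2\gamma\langle\nabla d_2(w^k_{d_3})-\nabla d_2(w^k_{d_2}),z^k-z^{k+1}\rangle+2\gamma\langle z^k-z^{k+1},\nabla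 d_2(w^k_{d_2})\rangle\\ &\quad+2\gamma^2\langle\nabla d_2(w^k_{d_3})-\nabla d_2(w^k_{d_2}),\nabla d_2(w^k_{d_2})\rangle. \end{aligned}$$
   Context: $\operatorname{prox}^\gamma_f(x)=\arg\min_{y}\big(f(y)+\frac{1}{2\gamma}\|y-x\|^2\big)$; one has $\tilde w=\operatorname{prox}^\gamma_f(w)$ iff $\gamma^{-1}(w-\tilde w)\in\partial f(\tilde w)$. The symbol $\nabla d_2(\cdot)$ denotes the specific subgradients indicated (gradients if $d_2$ is differentiable). *)

From HB Require Import structures.
From mathcomp Require Import all_boot all_order all_algebra.
From mathcomp Require Import all_classical all_reals all_analysis.
Set Implicit Arguments. Unset Strict Implicit. Unset Printing Implicit Defensive.
Import Order.TTheory GRing.Theory Num.Theory.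
Import numFieldNormedType.Exports.
Local Open Scope classical_set_scope.
Local Open Scope ring_scope.

Section Defs.
Variables (R : realType) (V : completeNormedModType R).

(* ip is an inner product on V inducing its norm (so V is a real Hilbert space). *)
Definition is_inner_product (ip : V -> V -> R) : Prop :=
  (forall x y, ip x y = ip y x) /\
  (forall (a : R) x y z, ip (a *: x + y) z = a * ip x z + ip y z) /\
  (forall x, ip x x = `|x| ^+ 2).

Definition proper_fun (f : V -> \bar R) : Prop :=
  (exists x, (f x < +oo)%E) /\ (forall x, (-oo < f x)%E).

Definition closed_fun (f : V -> \bar R) : Prop :=
  closed [set p : V * R | (f p.1 <= p.2%:E)%E].

Definition convex_efun (f : V -> \bar R) : Prop :=
  forall x y : V, forall t : R, 0 <= t <= 1 ->
    (f ((t *: x + (1 - t) *: y)%R) <= t%:E * f x + (1 - t)%:E * f y)%E.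

Definition subgrad (ip : V -> V -> R) (f : V -> \bar R) (x g : V) : Prop :=
  forall y, (f x + (ip g (y - x))%:E <= f y)%E.

Definition is_prox (f : V -> \bar R) (gamma : R) (x p : V) : Prop :=
  forall y, (f p + ((2 * gamma)^-1 * `|p - x| ^+ 2)%:E
             <= f y + ((2 * gamma)^-1 * `|y - x| ^+ 2)%:E)%E.

Definition DY_step (ip : V -> V -> R) (d1 d2 d3 : V -> \bar R) (gamma : R)
  (z w3 g3 w1 w2 z' : V) : Prop :=
  [/\ is_prox d3 gamma z w3,
      subgrad ip d2 w3 g3,
      is_prox d1 gamma (2 *: w3 - z - gamma *: g3) w1,
      is_prox d2 gamma (w1 + gamma *: g3) w2
    & z' = z + w2 - w3].

Definition DY_fixed_point (ip : V -> V -> R) (d1 d2 d3 : V -> \bar R) (gamma : R)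
  (w : V) : Prop :=
  exists w3 g3 w1 w2, DY_step ip d1 d2 d3 gamma w w3 g3 w1 w2 w.

End Defs.

(* The prox steps are first-order optimality conditions: (z - w3)/gamma is a
   subgradient of d3 at w3 and (2 w3 - z - gamma g3 - w1)/gamma one of d1 at
   w1.  Adding these two subgradient inequalities at w* to that of d2 at w3
   with g3, and multiplying by 2 gamma, gives the claim: the resulting
   right-hand side equals the claimed one identically once z^{k+1} and the
   subgradient of d2 at w2 are substituted. *)

From HB Require Import structures.
From mathcomp Require Import all_boot all_order all_algebra.
From mathcomp Require Import all_classical all_reals all_analysis.
From mathcomp Require Import lra ring.
Import Order.TTheory GRing.Theory Num.Theory.
Import numFieldNormedType.Exports.
Local Open Scope ring_scope.

Lemma ler_of_ler_add_small (R : realFieldType) (a b K : R) :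
  (forall t, 0 < t <= 1 -> a <= b + t * K) -> a <= b.
Proof.
move=> le_ab; have [K_le0 | K_gt0] := lerP K 0.
  by apply: le_trans (le_ab 1 _) _; rewrite ?ler01 ?ltr01 //; lra.
apply/ler_addgt0Pr => e e_gt0.
pose t := Num.min 1 (e / K).
have t_gt0 : 0 < t by rewrite lt_min ltr01 divr_gt0.
have tK_le_e : t * K <= e by rewrite -ler_pdivlMr // ge_min lexx orbT.
by apply: le_trans (le_ab t _) _; rewrite ?t_gt0 ?ge_min ?lexx ?lerD2l.
Qed.

Lemma fin_num_leD (R : numDomainType) (u v : \bar R) (c : R) :
  (-oo < u)%E -> (u + c%:E <= v)%E -> (v < +oo)%E -> u \is a fin_num.
Proof.
move=> u_gtNy le_uv v_ltey; rewrite fin_numE gt_eqF //=.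
by apply: contraTneq (le_lt_trans le_uv v_ltey) => ->; rewrite addye.
Qed.

Section InnerProduct.
Variables (R : realType) (V : completeNormedModType R) (ip : V -> V -> R).
Hypothesis ip_inner : is_inner_product ip.
Local Set Implicit Arguments.
Local Unset Strict Implicit.

Lemma ipC x y : ip x y = ip y x.
Proof. by case: ip_inner. Qed.

Lemma ipxx x : ip x x = `|x| ^+ 2.
Proof. by case: ip_inner => _ []. Qed.

Lemma ipDl x y z : ip (x + y) z = ip x z + ip y z.
Proof. by case: ip_inner => _ [ipL _]; rewrite -[x in LHS]scale1r ipL mul1r. Qed.

Lemma ip0l z : ip 0 z = 0.
Proof. by apply/(addrI (ip 0 z)); rewrite -ipDl !addr0. Qed.

Lemma ipZl a x z : ip (a *: x) z = a * ip x z.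
Proof. by case: ip_inner => _ [ipL _]; rewrite -[a *: x]addr0 ipL ip0l addr0. Qed.

Lemma ipNl x z : ip (- x) z = - ip x z.
Proof. by rewrite -scaleN1r ipZl mulN1r. Qed.

Lemma ipDr x y z : ip z (x + y) = ip z x + ip z y.
Proof. by rewrite ipC ipDl !(ipC z). Qed.

Lemma ipZr a x z : ip z (a *: x) = a * ip z x.
Proof. by rewrite ipC ipZl ipC. Qed.

Lemma ipNr x z : ip z (- x) = - ip z x.
Proof. by rewrite ipC ipNl ipC. Qed.

Lemma sqrnormD x y : `|x + y| ^+ 2 = `|x| ^+ 2 + 2 * ip x y + `|y| ^+ 2.
Proof. by rewrite -!ipxx ipDl !ipDr (ipC y x); ring. Qed.

Lemma ip_avgC x y : ip x y = (ip x y + ip y x) / 2.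
Proof. by rewrite (ipC y x); field. Qed.

Lemma subgrad_fin_num (f : V -> \bar R) (x g : V) :
  proper_fun f -> subgrad ip f x g -> f x \is a fin_num.
Proof. by move=> [[y fy_ltey] f_gtNy] /(_ y) /fin_num_leD; apply. Qed.

Lemma prox_fin_num (f : V -> \bar R) (gamma : R) (x p : V) :
  proper_fun f -> is_prox f gamma x p -> f p \is a fin_num.
Proof.
move=> [[y fy_ltey] f_gtNy] /(_ y) /fin_num_leD; apply => //.
by rewrite lte_add_pinfty ?ltry.
Qed.

Lemma prox_subgrad (f : V -> \bar R) (gamma : R) (x p : V) :
  proper_fun f -> convex_efun f -> 0 < gamma ->
  is_prox f gamma x p -> subgrad ip f p (gamma^-1 *: (x - p)).
Proof.
move=> f_proper f_cvx gamma_gt0 p_prox y.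
have fp_fin := prox_fin_num f_proper p_prox.
case: f_proper => _ f_gtNy.
case fyE : (f y) => [b | | ]; [ | by rewrite leey | by have := f_gtNy y; rewrite fyE].
rewrite -(fineK fp_fin) -EFinD lee_fin ipZl -opprB ipNl.
(* Minimality of p against p + t (y - p), combined with convexity, yields the
   subgradient inequality up to an error of order t. *)
apply: (@ler_of_ler_add_small _ _ _ ((2 * gamma)^-1 * `|y - p| ^+ 2)).
move=> t /andP[t_gt0 t_le1].
pose q := p + t *: (y - p).
have convex_combE : t *: y + (1 - t) *: p = q.
  by rewrite /q scalerBl scale1r scalerBr addrCA.
have := f_cvx y p t; rewrite ltW //= t_le1 convex_combE fyE -(fineK fp_fin).
rewrite -!EFinM -EFinD => /(_ isT) fq_le.
have fq_fin : f q \is a fin_num.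
  by rewrite fin_numE gt_eqF //= lt_eqF // (le_lt_trans fq_le) ?ltry.
have := p_prox q; rewrite -(fineK fq_fin) -(fineK fp_fin) -!EFinD lee_fin => prox_le.
rewrite -(fineK fq_fin) lee_fin in fq_le.
rewrite [q - x]addrAC (sqrnormD (p - x)) ipZr normrZ in prox_le.
rewrite (ger0_norm (ltW t_gt0)) in prox_le.
rewrite -(ler_pM2l t_gt0); move: prox_le fq_le; rewrite exprMn invfM; lra.
Qed.

Lemma davis_yin_identity (gamma : R) (z w3 g3 w1 w2 z' g2 x : V) : gamma != 0 ->
  z' = z + w2 - w3 -> g2 = gamma^-1 *: (w1 + gamma *: g3 - w2) ->
  - (2 * gamma) * (ip (gamma^-1 *: (2 *: w3 - z - gamma *: g3 - w1)) (x - w1)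
                   + ip g3 (x - w3) + ip (gamma^-1 *: (z - w3)) (x - w3))
  = `|z - x| ^+ 2 - `|z - z'| ^+ 2 - `|z' - x| ^+ 2
    + 2 * gamma * ip (g3 - g2) (z - x) - 2 * gamma * ip (g3 - g2) (z - z')
    + 2 * gamma * ip (z - z') g2 + 2 * gamma ^+ 2 * ip (g3 - g2) g2.
Proof.
move=> gamma_neq0 -> ->; rewrite -!ipxx !(ipDl, ipDr, ipNl, ipNr, ipZl, ipZr).
(* [field] treats [ip u v] and [ip v u] as unrelated atoms; averaging each
   pairing with its transpose makes the identity a polynomial one. *)
pose ip_sym u v := (ip u v + ip v u) / 2.
have ipE u v : ip u v = ip_sym u v by exact: ip_avgC.
by rewrite !ipE /ip_sym; field.
Qed.

End InnerProduct.

Theorem proposition4 (R : realType) (V : completeNormedModType R)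
  (ip : V -> V -> R) (d1 d2 d3 : V -> \bar R) (gamma : R)
  (z w3 g3 w1 w2 g2 : nat -> V) (wstar : V) :
  is_inner_product ip ->
  proper_fun d1 -> closed_fun d1 -> convex_efun d1 ->
  proper_fun d2 -> closed_fun d2 -> convex_efun d2 ->
  proper_fun d3 -> closed_fun d3 -> convex_efun d3 ->
  0 < gamma ->
  (forall k, DY_step ip d1 d2 d3 gamma (z k) (w3 k) (g3 k) (w1 k) (w2 k) (z k.+1)) ->
  (forall k, g2 k = gamma^-1 *: (w1 k + gamma *: g3 k - w2 k)) ->
  DY_fixed_point ip d1 d2 d3 gamma wstar ->
  forall k : nat,
    ((2 * gamma)%:E *
       (d1 (w1 k) + d2 (w3 k) + d3 (w3 k) - (d1 wstar + d2 wstar + d3 wstar))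
     <= (`|z k - wstar| ^+ 2 - `|z k - z k.+1| ^+ 2 - `|z k.+1 - wstar| ^+ 2
         + 2 * gamma * ip (g3 k - g2 k) (z k - wstar)
         - 2 * gamma * ip (g3 k - g2 k) (z k - z k.+1)
         + 2 * gamma * ip (z k - z k.+1) (g2 k)
         + 2 * gamma ^+ 2 * ip (g3 k - g2 k) (g2 k))%:E)%E.
Proof.
move=> ip_inner d1_proper _ d1_cvx d2_proper _ _ d3_proper _ d3_cvx gamma_gt0.
move=> step g2E _ k; case: (step k) => w3_prox g3_subgrad w1_prox _ zE.
have w1_subgrad := prox_subgrad ip_inner d1_proper d1_cvx gamma_gt0 w1_prox.
have w3_subgrad := prox_subgrad ip_inner d3_proper d3_cvx gamma_gt0 w3_prox.
have := leeD (leeD (w1_subgrad wstar) (g3_subgrad wstar)) (w3_subgrad wstar).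
rewrite -(fineK (subgrad_fin_num d1_proper w1_subgrad)).
rewrite -(fineK (subgrad_fin_num d2_proper g3_subgrad)).
rewrite -(fineK (subgrad_fin_num d3_proper w3_subgrad)).
rewrite -!EFinD => sum_le.
have two_gamma_ge0 : (0 <= (2 * gamma)%:E)%E by rewrite lee_fin; lra.
apply: le_trans (lee_wpmul2l two_gamma_ge0 (leeB (lexx _) sum_le)) _.
rewrite -!EFinD -EFinM lee_fin.
rewrite -(davis_yin_identity ip_inner wstar (lt0r_neq0 gamma_gt0) zE (g2E k)).
by rewrite le_eqVlt; apply/orP; left; apply/eqP; ring.
Qed.
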